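(* Let $m\ge 2$ and let $K\ne\Delta_{[m]}$ be a simplicial complex on $[m]$. Then for every prime $p$, $$s(\mathrm{Bier}(K))=s_p(\mathrm{Bier}(K))=f_0(K)-f_{m-2}(K)+1.$$
   Context: A simplicial complex $K$ on $[m]=\{1,\dots,m\}$ is a nonempty family of subsets of $[m]$ closed under taking subsets; $V(K)=\{i:\{i\}\in K\}$, and $f_i(K)$ is the number of faces of $K$ of cardinality $i+1$ (so $f_0(K)=|V(K)|$). $\Delta_{[m]}=2^{[m]}$. Let $[m']=\{1',\dots,m'\}$ be a disjoint copy of $[m]$, $I'=\{i':i\in I\}$. For $K\ne\Delta_{[m]}$ the Alexander dual $K^\vee$ is the complex on $[m']$ with $J'\in K^\vee$ iff $[m]\setminus J\notin K$. The Bier sphere $\mathrm{Bier}(K)$ is the complex on $[m]\sqcup[m']$ with faces $I\sqcup J'$, $I\in K$, $J'\in K^\vee$, $I\cap J=\varnothing$. For a simplicial complex $L$ with $n=|V(L)|$ vertices, the complex Buchstaber number $s(L)$ is the largest integer $r$ such that there is a map $\Lambda\colon V(L)\to\mathbb Z^{n-r}$ sending the vertex set of every face of $L$ injectively onto a subset of some basis of the lattice $\mathbb Z^{n-r}$. For a prime $p$, the mod $p$ Buchstaber number $s_p(L)$ is the largest $r$ such that there is a map $\Lambda_p\colon V(L)\to\mathbb Z_p^{n-r}$ sending the vertex set of every face injectively onto a linearly independent set over the field $\mathbb Z_p$. *)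

From Stdlib Require Import ClassicalEpsilon.
From mathcomp Require Import all_boot all_order all_algebra.
Set Implicit Arguments. Unset Strict Implicit. Unset Printing Implicit Defensive.
Import GRing.Theory.
Local Open Scope ring_scope.

Definition asb (P : Prop) : bool :=
  if excluded_middle_informative P then true else false.

Definition is_complex (m : nat) (K : {set {set 'I_m}}) : Prop :=
  K != set0 /\ forall A B : {set 'I_m}, B \subset A -> A \in K -> B \in K.

(* f_i(K): number of faces of cardinality i+1 *)
Definition fvec (m : nat) (K : {set {set 'I_m}}) (i : nat) : nat :=
  #|[set s in K | #|s| == i.+1]|.

(* Alexander dual, on the disjoint copy [m'] (represented again by 'I_m) *)
Definition alex_dual (m : nat) (K : {set {set 'I_m}}) : {set {set 'I_m}} :=
  [set J : {set 'I_m} | ~: J \notin K].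

(* Bier sphere on [m] ⊔ [m'] = 'I_m + 'I_m (inl i = i, inr j = j') *)
Definition Bier (m : nat) (K : {set {set 'I_m}}) : {set {set ('I_m + 'I_m)%type}} :=
  [set S : {set ('I_m + 'I_m)%type} |
    [&& [set i | inl i \in S] \in K,
        [set j | inr j \in S] \in alex_dual K &
        [disjoint [set i | inl i \in S] & [set j | inr j \in S]]]].

Definition vertices (T : finType) (L : {set {set T}}) : {set T} :=
  [set v | [set v] \in L].

(* Λ : V(L) -> Z^d sending every face injectively onto a subset of a basis
   of the lattice Z^d (a basis = the rows of an invertible integer matrix) *)
Definition Z_char_map (T : finType) (L : {set {set T}}) (d : nat) : Prop :=
  exists lam : T -> 'rV[int]_d,
    forall s, s \in L ->
      {in s &, injective lam} /\
      exists M : 'M[int]_d, M \in unitmx /\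
        forall v, v \in s -> exists i : 'I_d, lam v = row i M.

Definition Fp_char_map (p : nat) (T : finType) (L : {set {set T}}) (d : nat) : Prop :=
  exists lam : T -> 'rV['F_p]_d,
    forall s, s \in L ->
      {in s &, injective lam} /\ free [seq lam v | v <- enum s].

Definition buchstaber (T : finType) (L : {set {set T}}) : nat :=
  let n := #|vertices L| in
  (\max_(r < n.+1 | asb (Z_char_map L (n - r))) r)%N.

Definition buchstaber_p (p : nat) (T : finType) (L : {set {set T}}) : nat :=
  let n := #|vertices L| in
  (\max_(r < n.+1 | asb (Fp_char_map p L (n - r))) r)%N.

From Stdlib Require Import ClassicalEpsilon.
From mathcomp Require Import all_boot all_order all_algebra zify.
Set Implicit Arguments. Unset Strict Implicit. Unset Printing Implicit Defensive.
Import GRing.Theory.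
Local Open Scope ring_scope.

(* Send both i and i' to e_i for i < m and to -(e_1 + ... + e_(m-1)) for i = m.
   A face of Bier(K) never contains both k and k' and always misses some k
   together with k', so its image consists of distinct rows of the involutive
   matrix obtained from the identity by replacing row k with (-1, ..., -1):
   this is a characteristic map of rank m - 1 over Z and over every Z_p.
   Conversely, for a maximal face A of K and k outside A, the set
   A ⊔ ([m] \ (A ∪ {k}))' is a face with m - 1 vertices, so no smaller rank is
   possible. Hence s = s_p = |V(Bier K)| - (m - 1), and V(Bier K) consists of
   the vertices of K and the j' with [m] \ {j} not in K, which gives
   |V(Bier K)| = f_0 + m - f_(m-2). *)

Lemma asbP (P : Prop) : reflect P (asb P).
Proof. by rewrite /asb; case: excluded_middle_informative => h; constructor. Qed.

Lemma bigmax_sub_least n a (P : pred nat) :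
  (a <= n)%N -> P a -> (forall d, P d -> a <= d)%N ->
  (\max_(r < n.+1 | P (n - r)) r)%N = (n - a)%N.
Proof.
move=> le_an Pa least_a; apply/eqP; rewrite eqn_leq; apply/andP; split.
  by apply/bigmax_leqP => r /least_a; have := ltn_ord r; lia.
have lt_na : (n - a < n.+1)%N by lia.
by apply: (leq_bigmax_cond (Ordinal lt_na)); rewrite /= subKn.
Qed.

Section CharacteristicMaps.
Variables (T : finType) (L : {set {set T}}).

Lemma Z_char_map_face_card d S : S \in L -> Z_char_map L d -> (#|S| <= d)%N.
Proof.
move=> LS [lam /(_ S LS) [inj_lam [M [_ rows_lam]]]].
rewrite cardE -(size_map lam).
apply: leq_trans (_ : size [seq row i M | i <- enum 'I_d] <= d)%N; last first.
  by rewrite size_map size_enum_ord.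
apply: uniq_leq_size => [|_ /mapP[v + ->]].
  by rewrite map_inj_in_uniq ?enum_uniq // => u v; rewrite !mem_enum; apply: inj_lam.
by rewrite mem_enum => /rows_lam[i ->]; apply: map_f; rewrite mem_enum.
Qed.

Lemma Fp_char_map_face_card p d S : S \in L -> Fp_char_map p L d -> (#|S| <= d)%N.
Proof.
move=> LS [lam /(_ S LS) [_ free_lam]].
rewrite cardE -(size_map lam) -(eqP free_lam).
by apply: leq_trans (dimvS (subvf _)) _; rewrite dimvf dim_matrix mul1r.
Qed.

Lemma buchstaber_facet d S : S \in L -> S \subset vertices L -> #|S| = d ->
  Z_char_map L d -> (buchstaber L + d)%N = #|vertices L|.
Proof.
move=> LS SV card_S Ld.
have le_dV : (d <= #|vertices L|)%N by rewrite -card_S subset_leq_card.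
rewrite /buchstaber (@bigmax_sub_least _ d (fun e => asb (Z_char_map L e))) ?subnK //.
  exact/asbP.
by move=> e /asbP/(Z_char_map_face_card LS); rewrite card_S.
Qed.

Lemma buchstaber_p_facet p d S : S \in L -> S \subset vertices L -> #|S| = d ->
  Fp_char_map p L d -> (buchstaber_p p L + d)%N = #|vertices L|.
Proof.
move=> LS SV card_S Ld.
have le_dV : (d <= #|vertices L|)%N by rewrite -card_S subset_leq_card.
rewrite /buchstaber_p (@bigmax_sub_least _ d (fun e => asb (Fp_char_map p L e))) ?subnK //.
  exact/asbP.
by move=> e /asbP/(Fp_char_map_face_card LS); rewrite card_S.
Qed.

End CharacteristicMaps.

Section SimplexVertices.
Variables (R : nzRingType) (d : nat).

Definition simplex_vertex (i : 'I_d.+1) : 'rV[R]_d :=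
  if (i < d)%N then \row_j ((j : nat) == i)%:R else const_mx (-1).

(* For [k = d] no row index equals [k], so this is the identity matrix. *)
Definition simplex_facet_mx (k : 'I_d.+1) : 'M[R]_d :=
  \matrix_(a, b) if (a : nat) == k then -1 else (a == b)%:R.

Lemma simplex_vertexE i j :
  simplex_vertex i 0 j = if (i < d)%N then ((j : nat) == i)%:R else -1.
Proof. by rewrite /simplex_vertex; case: ifP; rewrite mxE. Qed.

Lemma sum_delta_neq (a b : 'I_d) :
  \sum_(l | l != a) (l == b)%:R = (a != b)%:R :> R.
Proof.
rewrite (eq_bigr (fun l => if l == b then 1 else 0)) => [|l _]; last by case: eqP.
rewrite -big_mkcondr; have [<- | a_neq_b] /= := eqVneq a b.
  by rewrite big_pred0 // => l; case: eqVneq.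
rewrite (eq_bigl (pred1 b)) ?big_pred1_eq // => l /=.
by case: (eqVneq l b) => [->|]; rewrite ?andbF // eq_sym a_neq_b.
Qed.

Lemma simplex_facet_mxK k : simplex_facet_mx k *m simplex_facet_mx k = 1%:M.
Proof.
apply/matrixP => a b; rewrite !mxE.
have [a_k | a_neq_k] := eqVneq (a : nat) k; last first.
  under eq_bigr do rewrite mxE (negbTE a_neq_k).
  rewrite (bigD1 a) //= eqxx mul1r big1 ?addr0 => [|l l_neq_a]; last first.
    by rewrite eq_sym (negbTE l_neq_a) mul0r.
  by rewrite mxE (negbTE a_neq_k).
under eq_bigr do rewrite mxE a_k eqxx mulN1r.
rewrite sumrN (bigD1 a) //= mxE a_k eqxx.
under eq_bigr => l l_neq_a do rewrite mxE -a_k [_ == _](negbTE l_neq_a).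
by rewrite sum_delta_neq opprD opprK; case: eqP; rewrite ?subrr ?subr0.
Qed.

Lemma simplex_vertex_row k i :
  i != k -> exists r, simplex_vertex i = row r (simplex_facet_mx k).
Proof.
move=> i_neq_k; have {i_neq_k}/negbTE i_neq_k : (i : nat) != k := i_neq_k.
rewrite /simplex_vertex; case: ltnP => [lt_id | le_di].
  by exists (Ordinal lt_id); apply/rowP => j; rewrite !mxE /= i_neq_k eq_sym.
have lt_kd : (k < d)%N by move/eqP: i_neq_k; have := ltn_ord i; have := ltn_ord k; lia.
by exists (Ordinal lt_kd); apply/rowP => j; rewrite !mxE /= eqxx.
Qed.

Lemma simplex_vertex_inj k : {in [pred i | i != k] &, injective simplex_vertex}.
Proof.
move=> i j; rewrite !inE -!val_eqE /= => i_neq_k j_neq_k eq_ij.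
apply: ord_inj; apply/eqP/negPn/negP => i_neq_j.
wlog lt_id : i j i_neq_k j_neq_k eq_ij i_neq_j / (i < d)%N => [wlog_i|].
  have [lt_id | le_di] := ltnP i d; first exact: (wlog_i i j).
  apply: (wlog_i j i) => //; first by rewrite eq_sym.
  by move/eqP: i_neq_j; have := ltn_ord i; have := ltn_ord j; lia.
have entry c := congr1 (fun v : 'rV[R]_d => v 0 c) eq_ij.
have [lt_jd | le_dj] := ltnP j d.
  move: (entry (Ordinal lt_id)) => /=; rewrite !simplex_vertexE lt_id lt_jd /= eqxx.
  by rewrite (negbTE i_neq_j) => /eqP; rewrite oner_eq0.
have lt_kd : (k < d)%N by move/eqP: j_neq_k; have := ltn_ord j; have := ltn_ord k; lia.
move: (entry (Ordinal lt_kd)) => /=; rewrite !simplex_vertexE lt_id ltnNge le_dj /=.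
by rewrite eq_sym (negbTE i_neq_k) => /eqP; rewrite eq_sym oppr_eq0 oner_eq0.
Qed.

End SimplexVertices.

Lemma free_rows_unitmx (F : fieldType) d (M : 'M[F]_d) :
  M \in unitmx -> free [tuple row i M | i < d].
Proof.
move=> unitM; apply/freeP => c comb0 i.
have : \row_j c j *m M = 0.
  by rewrite mulmx_sum_row -[RHS]comb0; apply: eq_bigr => j _; rewrite mxE nth_mktuple.
move/(congr1 (mulmx^~ (invmx M))); rewrite mulmxK // mul0mx.
by move/rowP/(_ i); rewrite !mxE.
Qed.

Lemma free_uniq_rows_unitmx (F : fieldType) d (M : 'M[F]_d) (X : seq 'rV[F]_d) :
  M \in unitmx -> uniq X -> (forall x, x \in X -> exists i, x = row i M) -> free X.
Proof.
move=> /free_rows_unitmx free_rows uniqX rowsX.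
have uniq_rows := free_uniq free_rows.
rewrite -(perm_free (uniq_perm (filter_uniq (mem X) uniq_rows) uniqX _)) ?filter_free //.
move=> x; rewrite mem_filter andb_idr // => /rowsX[i ->].
by rewrite -(tnth_mktuple (fun j => row j M) i) mem_tnth.
Qed.

Section DisjointSum.
Variable n : nat.
Implicit Types A B : {set 'I_n}.

Definition dsum_set A B : {set 'I_n + 'I_n} := inl @: A :|: inr @: B.

Lemma inl_dsum_set A B i : (inl i \in dsum_set A B) = (i \in A).
Proof.
apply/setUP/idP => [[/imsetP[a Aa [->]] | /imsetP[]] // | Ai].
by left; apply: imset_f.
Qed.

Lemma inr_dsum_set A B j : (inr j \in dsum_set A B) = (j \in B).
Proof.
apply/setUP/idP => [[/imsetP[] | /imsetP[b Bb [->]]] // | Bj].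
by right; apply: imset_f.
Qed.

Lemma card_dsum_set A B : #|dsum_set A B| = (#|A| + #|B|)%N.
Proof.
have inl_inj : injective (@inl 'I_n 'I_n) by move=> ? ? [].
have inr_inj : injective (@inr 'I_n 'I_n) by move=> ? ? [].
rewrite -(card_imset A inl_inj) -(card_imset B inr_inj); apply/eqP.
rewrite (leq_card_setU _ _).2 disjoint_subset; apply/subsetP => _ /imsetP[a _ ->].
by rewrite inE; apply/imsetP => -[].
Qed.

Lemma mem_Bier_dsum_set K A B :
  (dsum_set A B \in Bier K) = [&& A \in K, B \in alex_dual K & [disjoint A & B]].
Proof.
have inlE : [set i | inl i \in dsum_set A B] = A.
  by apply/setP => i; rewrite inE inl_dsum_set.
have inrE : [set j | inr j \in dsum_set A B] = B.
  by apply/setP => j; rewrite inE inr_dsum_set.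
by rewrite inE inlE inrE.
Qed.

End DisjointSum.

Section FaceNumbers.
Variables (n : nat) (K : {set {set 'I_n}}).

Lemma fvec0 : fvec K 0 = #|[set i | [set i] \in K]|.
Proof.
rewrite /fvec -[RHS](card_imset _ set1_inj); congr #|pred_of_set _|.
apply/setP => s; rewrite !inE.
apply/andP/imsetP => [[Ks /cards1P[i si]] | [i + ->]].
  by exists i; rewrite // inE -si.
by rewrite inE cards1 => Ki.
Qed.

Lemma fvec_codim1 : (1 < n)%N -> fvec K (n - 2) = #|[set j | ~: [set j] \in K]|.
Proof.
move=> lt1n; have compl_inj : injective (fun j : 'I_n => ~: [set j]).
  by move=> i j /setC_inj/set1_inj.
rewrite /fvec -[RHS](card_imset _ compl_inj); congr #|pred_of_set _|.
apply/setP => s; rewrite !inE.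
have card_compl := cardsC s; rewrite card_ord in card_compl.
apply/andP/imsetP => [[Ks /eqP card_s] | [j + ->]].
  have /cards1P[j sj] : #|~: s| == 1%N by apply/eqP; lia.
  by exists j; rewrite ?inE -sj setCK.
rewrite inE => Kj; split=> //; apply/eqP.
by rewrite cardsC1 card_ord; lia.
Qed.

End FaceNumbers.

Section BierSphere.
Variables (n : nat) (K : {set {set 'I_n}}).
Hypotheses (complexK : is_complex K) (K_proper : K != [set: {set 'I_n}]).
Implicit Types S U : {set 'I_n + 'I_n}.

Lemma complex_set0 : set0 \in K.
Proof. by have [/set0Pn[A KA] closedK] := complexK; apply: closedK (sub0set A) KA. Qed.

Lemma complex_setT : setT \notin K.
Proof.
apply: contra K_proper => KT; have [_ closedK] := complexK.
by apply/eqP/setP => A; rewrite inE (closedK _ _ (subsetT A) KT).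
Qed.

Lemma Bier_subset S U : U \subset S -> S \in Bier K -> U \in Bier K.
Proof.
have [_ closedK] := complexK.
move=> sub_US; rewrite !inE => /and3P[KI dualJ disjIJ].
have subI : [set i | inl i \in U] \subset [set i | inl i \in S].
  by apply/subsetP => i; rewrite !inE; apply: (subsetP sub_US).
have subJ : [set j | inr j \in U] \subset [set j | inr j \in S].
  by apply/subsetP => j; rewrite !inE; apply: (subsetP sub_US).
apply/and3P; split; first exact: closedK subI KI.
  by move: dualJ; apply: contra; apply: closedK; rewrite setCS.
exact: disjointW subI subJ disjIJ.
Qed.

Lemma Bier_face_sub_vertices S : S \in Bier K -> S \subset vertices (Bier K).
Proof.
by move=> BS; apply/subsetP => v Sv; rewrite inE; apply: Bier_subset BS; rewrite sub1set.
Qed.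

Lemma Bier_face_inr S k : S \in Bier K -> inl k \in S -> inr k \notin S.
Proof.
rewrite inE => /and3P[_ _ disjIJ] Sk; apply: contraL disjIJ => Sk'.
by apply/pred0Pn; exists k; rewrite /= !inE Sk Sk'.
Qed.

Lemma Bier_face_avoid S :
  S \in Bier K -> exists k, (inl k \notin S) && (inr k \notin S).
Proof.
have [_ closedK] := complexK.
rewrite inE => /and3P[KI dualJ _]; apply/existsP; apply: contraLR dualJ.
rewrite negb_exists => /forallP cover; rewrite !inE negbK; apply: closedK KI.
apply/subsetP => k; rewrite !inE => /negPf Sk'.
by move: (cover k); rewrite Sk' andbT negbK.
Qed.

Lemma vertices_Bier :
  vertices (Bier K) = dsum_set [set i | [set i] \in K] [set j | ~: [set j] \notin K].
Proof.
apply/setP => -[i|j]; rewrite inE ?inl_dsum_set ?inr_dsum_set [in RHS]inE.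
  have -> : [set inl i] = dsum_set [set i] set0.
    by apply/setP => -[a|a]; rewrite ?inl_dsum_set ?inr_dsum_set !inE.
  by rewrite mem_Bier_dsum_set inE setC0 complex_setT -setI_eq0 setI0 eqxx !andbT.
have -> : [set inr j] = dsum_set set0 [set j].
  by apply/setP => -[a|a]; rewrite ?inl_dsum_set ?inr_dsum_set !inE.
by rewrite mem_Bier_dsum_set complex_set0 inE -setI_eq0 set0I eqxx andbT.
Qed.

Lemma card_vertices_Bier :
  (1 < n)%N -> (#|vertices (Bier K)| + fvec K (n - 2) = fvec K 0 + n)%N.
Proof.
move=> lt1n; rewrite vertices_Bier card_dsum_set fvec0 fvec_codim1 // -addnA.
have -> : [set j | ~: [set j] \notin K] = ~: [set j | ~: [set j] \in K].
  by apply/setP => j; rewrite !inE.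
by congr (_ + _)%N; rewrite addnC cardsC card_ord.
Qed.

Lemma Bier_facet : exists2 S, S \in Bier K & #|S| = n.-1.
Proof.
have [A maxA _] := maxset_exists (P := mem K) complex_set0.
have KA : A \in K := maxsetp maxA.
have /subsetPn[k _ Ak] : ~~ ([set: 'I_n] \subset A).
  by rewrite subTset; apply: contraNneq complex_setT => <-.
exists (dsum_set A (~: (k |: A))).
  rewrite mem_Bier_dsum_set KA inE setCK disjoints_subset setCK subsetUr andbT.
  by apply: contraNN Ak => /(maxsetsup maxA)/(_ (subsetUr _ _)) <-; rewrite setU11.
rewrite card_dsum_set; have := cardsC (k |: A); rewrite cardsU1 Ak card_ord; lia.
Qed.

End BierSphere.

Definition codiag (T : Type) (x : T + T) : T := match x with inl t | inr t => t end.

Definition Bier_char (R : nzRingType) d (x : 'I_d.+1 + 'I_d.+1) : 'rV[R]_d :=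
  simplex_vertex R (codiag x).

Section BierCharacteristicMap.
Variables (d : nat) (K : {set {set 'I_d.+1}}).
Hypothesis complexK : is_complex K.

Lemma Bier_char_face (R : comUnitRingType) S : S \in Bier K ->
  {in S &, injective (@Bier_char R d)} /\
  exists M : 'M[R]_d, M \in unitmx /\
    forall v, v \in S -> exists i, Bier_char R v = row i M.
Proof.
move=> BS; have [k /andP[Sk Sk']] := Bier_face_avoid complexK BS.
have codiag_k v : v \in S -> codiag v != k.
  by case: v => i Si; [apply: contraNneq Sk | apply: contraNneq Sk'] => /= <-.
split.
  move=> u v Su Sv /(simplex_vertex_inj (codiag_k _ Su) (codiag_k _ Sv)).
  case: u v Su Sv => i [] j /= Si Sj ij; subst j => //.
    by have := Bier_face_inr BS Si; rewrite Sj.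
  by have := Bier_face_inr BS Sj; rewrite Si.
exists (simplex_facet_mx R k); split.
  by case/mulmx1_unit: (simplex_facet_mxK R k).
by move=> v /codiag_k /simplex_vertex_row.
Qed.

Lemma Z_char_map_Bier : Z_char_map (Bier K) d.
Proof. by exists (@Bier_char int d) => S; apply: Bier_char_face. Qed.

Lemma Fp_char_map_Bier p : Fp_char_map p (Bier K) d.
Proof.
exists (@Bier_char 'F_p d) => S /(Bier_char_face 'F_p)[inj_char [M [unitM rows_char]]].
split=> //; apply: free_uniq_rows_unitmx unitM _ _.
  by rewrite map_inj_in_uniq ?enum_uniq // => u v; rewrite !mem_enum; apply: inj_char.
by move=> _ /mapP[v + ->]; rewrite mem_enum; apply: rows_char.
Qed.

End BierCharacteristicMap.

Theorem mainTheorem12 (m : nat) (K : {set {set 'I_m}}) :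
  (2 <= m)%N -> is_complex K -> K != [set: {set 'I_m}] ->
  (buchstaber (Bier K))%:Z = (fvec K 0)%:Z - (fvec K (m - 2))%:Z + 1 /\
  forall p : nat, prime p ->
    (buchstaber_p p (Bier K))%:Z = (fvec K 0)%:Z - (fvec K (m - 2))%:Z + 1.
Proof.
case: m K => [|[|m]] // K _ complexK K_proper.
have [S BS card_S] := Bier_facet complexK K_proper.
have S_vertices := Bier_face_sub_vertices complexK BS.
have card_V := card_vertices_Bier complexK K_proper (isT : (1 < m.+2)%N).
have := buchstaber_facet BS S_vertices card_S (Z_char_map_Bier complexK).
split=> [|p _]; first lia.
have := buchstaber_p_facet BS S_vertices card_S (Fp_char_map_Bier complexK p); lia.
Qed.
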